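(* Let $x,y\in\mathbb{R}[X]$ with $\deg x\le 1$ and $\deg y\le 1$, and let $\gamma\in\mathbb{R}[X]$ be a polynomial without real roots such that $p=x/\gamma$ and $q=y/\gamma$ lie in $D$. Then $\begin{pmatrix} p & q\\ 0 & 0\end{pmatrix}$ is a product of idempotent $2\times 2$ matrices over $D$.
   Context: $D$ denotes the minimal Dress ring of the field $\mathbb{R}(X)$, i.e. the subring of $\mathbb{R}(X)$ generated by $\mathbb{Z}$ and all elements $1/(1+h^2)$ with $h\in\mathbb{R}(X)$. A matrix $E$ is idempotent if $E^2=E$. *)

From HB Require Import structures.
From Stdlib Require Import Reals ClassicalEpsilon FunctionalExtensionality.
From mathcomp Require Import all_boot all_order all_algebra.
Set Implicit Arguments. Unset Strict Implicit. Unset Printing Implicit Defensive.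
Import GRing.Theory.

Definition realR : Type := R.

Definition realR_eqb (x y : realR) : bool := if Req_EM_T x y then true else false.
Lemma realR_eqP : Equality.axiom realR_eqb.
Proof. move=> x y; rewrite /realR_eqb; case: Req_EM_T => h; constructor; exact h. Qed.
HB.instance Definition _ := hasDecEq.Build realR realR_eqP.

Definition realR_find (P : pred realR) (n : nat) : option realR :=
  match excluded_middle_informative (exists x, P x) with
  | left h => Some (proj1_sig (constructive_indefinite_description _ h))
  | right _ => None
  end.
Lemma realR_find_correct P n x : realR_find P n = Some x -> P x.
Proof.
rewrite /realR_find; case: excluded_middle_informative => // h [<-].
exact: proj2_sig (constructive_indefinite_description _ h).
Qed.
Lemma realR_find_complete (P : pred realR) :
  (exists x, P x) -> exists n, realR_find P n.
Proof. move=> h; exists 0%N; rewrite /realR_find; by case: excluded_middle_informative. Qed.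
Lemma realR_find_ext (P Q : pred realR) : P =1 Q -> realR_find P =1 realR_find Q.
Proof.
move=> h; have -> : P = Q by apply: functional_extensionality.
by [].
Qed.
HB.instance Definition _ := hasChoice.Build realR realR_find_correct
  realR_find_complete realR_find_ext.

Lemma realR_addA : associative (Rplus : realR -> realR -> realR).
Proof. by move=> x y z; rewrite Rplus_assoc. Qed.
Lemma realR_addC : commutative (Rplus : realR -> realR -> realR).
Proof. exact: Rplus_comm. Qed.
Lemma realR_add0 : left_id (R0 : realR) Rplus.
Proof. exact: Rplus_0_l. Qed.
Lemma realR_addN : left_inverse (R0 : realR) Ropp Rplus.
Proof. exact: Rplus_opp_l. Qed.
HB.instance Definition _ := GRing.isZmodule.Build realR realR_addA realR_addC
  realR_add0 realR_addN.

Lemma realR_mulA : associative (Rmult : realR -> realR -> realR).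
Proof. by move=> x y z; rewrite Rmult_assoc. Qed.
Lemma realR_mulC : commutative (Rmult : realR -> realR -> realR).
Proof. exact: Rmult_comm. Qed.
Lemma realR_mul1 : left_id (R1 : realR) Rmult.
Proof. exact: Rmult_1_l. Qed.
Lemma realR_mulDl : left_distributive (Rmult : realR -> realR -> realR) Rplus.
Proof. by move=> x y z; rewrite Rmult_plus_distr_r. Qed.
Lemma realR_one_neq0 : (R1 : realR) != (R0 : realR).
Proof. by apply/eqP; exact: R1_neq_R0. Qed.
HB.instance Definition _ := GRing.Zmodule_isComNzRing.Build realR realR_mulA
  realR_mulC realR_mul1 realR_mulDl realR_one_neq0.

Definition realR_inv (x : realR) : realR := if realR_eqb x R0 then R0 else Rinv x.
Lemma realR_mulV (x : realR) : x != 0%R -> (realR_inv x * x)%R = 1%R.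
Proof.
move=> /eqP h; rewrite /realR_inv; case: realR_eqP => [//|_].
exact: Rinv_l.
Qed.
Lemma realR_inv0 : realR_inv 0%R = 0%R.
Proof. by rewrite /realR_inv; case: realR_eqP. Qed.
HB.instance Definition _ := GRing.ComNzRing_isField.Build realR realR_mulV realR_inv0.

Definition RX : Type := {fraction {poly realR}}.

Local Open Scope ring_scope.

(* The minimal Dress ring D of R(X): the subring of R(X) generated by Z and
   all elements 1/(1+h^2), h in R(X). *)
Inductive dress : RX -> Prop :=
  | dress_one : dress 1
  | dress_gen (h : RX) : dress (1 / (1 + h ^+ 2))
  | dress_add (a b : RX) : dress a -> dress b -> dress (a + b)
  | dress_opp (a : RX) : dress a -> dress (- a)
  | dress_mul (a b : RX) : dress a -> dress b -> dress (a * b).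

Definition mx_over_dress (n : nat) (A : 'M[RX]_n) : Prop := forall i j, dress (A i j).

Definition idempotent_mx (n : nat) (E : 'M[RX]_n) : Prop := E *m E = E.

Definition prod_idempotents_over_dress (n : nat) (A : 'M[RX]_n) : Prop :=
  exists s : seq 'M[RX]_n,
    (forall E, E \in s -> mx_over_dress E /\ idempotent_mx E) /\
    A = foldr (fun E B => E *m B) 1%:M s.

Notation "x %:F" := (@FracField.tofrac _ x) : ring_scope.

From HB Require Import structures.
From Stdlib Require Import Reals.
From mathcomp Require Import all_boot all_order all_algebra.
From mathcomp Require Import Rstruct complex ring lra zify.
Import Order.TTheory GRing.Theory Num.Theory.
Local Open Scope ring_scope.

(* For a nonzero real c and E = [[1 - cQ, b], [cP, cQ]], which has trace 1 and
   determinant 0 and is therefore idempotent, [[P, Q], [0, 0]] = [[0, 1/c], [0, 0]] E,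
   and [[0, k], [0, 0]] = [[1, 0], [0, 0]] [[0, k], [0, 1]] is a product of two
   idempotents; swapping the rows of E works the same way with [[k, 0], [0, 0]].
   So it suffices to find b in D with b (cP) = (1 - cQ) (cQ). If x has a root a at
   which y does not vanish, c = gamma(a) / y(a) makes x divide gamma - c y = N x, and
   b = y N / gamma has numerator degree at most deg gamma; if y = k x then c = 1 and
   b = k (1 - Q) work, and if x is a nonzero constant the roles of x and y are
   exchanged using the row-swapped E. Fractions N/gamma with deg N <= deg gamma lie in D by
   partial fractions: gamma is a product of real quadratics (t - a)^2 + s^2, and over
   one of them a numerator of degree at most 1 is a real combination of 1/(1 + v^2)
   and v/(1 + v^2) = 1/(1 + ((v-1)/(v+1))^2) - 1/2 with v = (t - a)/s; finally every
   real number lies in D since every number of (0, 1] is some 1/(1 + h^2). *)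

Lemma dress0 : dress 0.
Proof. by rewrite -(subrr 1); apply: dress_add; [exact: dress_one|exact: dress_opp dress_one]. Qed.

#[local] Hint Resolve dress_one dress0 : core.

Lemma dress_sub a b : dress a -> dress b -> dress (a - b).
Proof. by move=> ha hb; apply: dress_add => //; exact: dress_opp. Qed.

Lemma dress_natr n : dress n%:R.
Proof. by elim: n => [|n IH] //; rewrite mulrS; apply: dress_add. Qed.

(* r = n (2w - 1) with n an integer, 0 < w <= 1 and w = 1/(1 + h^2). *)
Lemma dress_rmorph [F : archiRcfType] (f : {rmorphism F -> RX}) (r : F) : dress (f r).
Proof.
have [n hn] : exists n : nat, `|r| < n%:R by exists (Num.bound `|r|); apply: archi_boundP.
have n_gt0 : 0 < n%:R :> F by apply: le_lt_trans hn.
pose w := (r / n%:R + 1) / 2.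
have [w_gt0 w_le1] : 0 < w /\ w <= 1.
  move: hn; rewrite ltr_norml => /andP[h1 h2].
  have q1 : r / n%:R < 1 by rewrite ltr_pdivrMr // mul1r.
  have q2 : -1 < r / n%:R by rewrite ltr_pdivlMr // mulN1r.
  by rewrite /w; lra.
have -> : r = n%:R * (w + w - 1) by rewrite /w; field; rewrite gt_eqF.
pose h := Num.sqrt (w^-1 - 1).
have hw : w = (1 + h ^+ 2)^-1.
  rewrite sqr_sqrtr ?subr_ge0 ?invf_ge1 // addrC subrK invrK //.
rewrite rmorphM rmorph_nat rmorphB rmorphD rmorph1 hw fmorphV rmorphD rmorph1 rmorphXn.
apply: dress_mul; first exact: dress_natr.
by apply: dress_sub => //; apply: dress_add; rewrite -div1r; exact: dress_gen.
Qed.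

Lemma poly_size2E [R : nzRingType] [p : {poly R}] : (size p <= 2)%N ->
  p = (p`_0)%:P + (p`_1)%:P * 'X.
Proof.
move=> hs; apply/polyP => i; rewrite coefD coefC coefCM coefX.
case: i => [|[|i]] /=; rewrite ?mulr0 ?mulr1 ?addr0 ?add0r //.
by rewrite nth_default // (leq_trans hs).
Qed.

Lemma size_sqr_XsubC_addC (R : idomainType) (a c : R) :
  size (('X - a%:P) ^+ 2 + c%:P) = 3%N.
Proof. by rewrite size_addl ?size_exp_XsubC // size_polyC; case: (c != 0). Qed.

Local Open Scope complex_scope.

Lemma rootfree_quadratic_factor [R : rcfType] [g : {poly R}] :
    (forall r, ~~ root g r) -> (1 < size g)%N ->
  exists a b : R, b != 0 /\ ('X - a%:P) ^+ 2 + (b ^+ 2)%:P %| g.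
Proof.
move=> g_rootfree g_nconst.
pose gC := map_poly (real_complex R) g.
have : size gC != 1%N by rewrite size_map_inj_poly ?gtn_eqF //; exact: complexI.
move=> /closed_rootP [[a b] gC_ab].
have b_neq0 : b != 0.
  apply: contraTneq gC_ab => ->.
  by rewrite -[a +i* 0]/(real_complex R a) /root horner_map fmorph_eq0 g_rootfree.
exists a, b; split => //.
set Q := _ + _.
have Q_neq0 : Q != 0 by rewrite -size_poly_eq0 size_sqr_XsubC_addC.
have QC_ab : (map_poly (real_complex R) Q).[a +i* b] = 0.
  rewrite rmorphD rmorphXn /= map_polyXsubC map_polyC /= hornerD hornerC.
  by rewrite horner_exp hornerXsubC expr2; simpc; rewrite -expr2 addNr.
have r_small : (size (g %% Q)%R <= 2)%N.
  by have := ltn_modpN0 g Q_neq0; rewrite size_sqr_XsubC_addC.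
have : (map_poly (real_complex R) (g %% Q)).[a +i* b] = 0.
  move: gC_ab; rewrite /root /gC {1}(divp_eq g Q) rmorphD rmorphM /=.
  by rewrite hornerD hornerM QC_ab mulr0 add0r => /eqP.
rewrite /dvdp (poly_size2E r_small) rmorphD rmorphM /= map_polyX !map_polyC /=.
rewrite hornerD hornerM hornerX !hornerC; simpc => -[r0 /eqP].
rewrite mulf_eq0 (negbTE b_neq0) orbF => /eqP r1.
by move: r0; rewrite r1 mul0r addr0 => ->; rewrite mul0r addr0 polyC0 -size_poly_eq0 size_poly0.
Qed.
Local Close Scope complex_scope.

(* realR and Stdlib's R are the same type carrying two convertible ring structures;
   only the one on R (from Rstruct) is real closed and archimedean. *)
Definition R_of_realR (x : realR) : R := x.
Definition realR_of_R (x : R) : realR := x.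
Fact R_of_realR_is_zmod_morphism : zmod_morphism R_of_realR. Proof. by []. Qed.
Fact R_of_realR_is_monoid_morphism : monoid_morphism R_of_realR. Proof. by []. Qed.
HB.instance Definition _ :=
  GRing.isZmodMorphism.Build realR R R_of_realR R_of_realR_is_zmod_morphism.
HB.instance Definition _ :=
  GRing.isMonoidMorphism.Build realR R R_of_realR R_of_realR_is_monoid_morphism.
Fact realR_of_R_is_zmod_morphism : zmod_morphism realR_of_R. Proof. by []. Qed.
Fact realR_of_R_is_monoid_morphism : monoid_morphism realR_of_R. Proof. by []. Qed.
HB.instance Definition _ :=
  GRing.isZmodMorphism.Build R realR realR_of_R realR_of_R_is_zmod_morphism.
HB.instance Definition _ :=
  GRing.isMonoidMorphism.Build R realR realR_of_R realR_of_R_is_monoid_morphism.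

Lemma realR_rootfree_quadratic_factor [g : {poly realR}] :
    (forall r, ~~ root g r) -> (1 < size g)%N ->
  exists a b : realR, b != 0 /\ ('X - a%:P) ^+ 2 + (b ^+ 2)%:P %| g.
Proof.
move=> g_rootfree g_nconst.
have gR_rootfree r : ~~ root (map_poly R_of_realR g) r.
  by rewrite -[r]/(R_of_realR r) /root horner_map fmorph_eq0 g_rootfree.
have [|a [b [b_neq0 Q_dvd]]] := rootfree_quadratic_factor gR_rootfree.
  by rewrite size_map_inj_poly.
exists (realR_of_R a), (realR_of_R b); split; first by rewrite fmorph_eq0.
rewrite -(dvdp_map R_of_realR) rmorphD rmorphXn /= map_polyXsubC map_polyC /=.
by rewrite rmorphXn.
Qed.

Definition cst (r : realR) : RX := (r%:P)%:F.
HB.instance Definition _ := GRing.RMorphism.copy cst ((@FracField.tofrac _) \o polyC).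

Lemma dress_cst (r : realR) : dress (cst r).
Proof. exact: (dress_rmorph (cst \o realR_of_R) r). Qed.

Lemma tofrac_1sqr_neq0 (v : {poly realR}) : 1 + v%:F ^+ 2 != 0.
Proof.
rewrite -tofrac1 -tofracXn -tofracD tofrac_eq0; apply/eqP => /(congr1 (horner^~ 0)).
rewrite hornerD hornerC horner_exp horner0 => /(congr1 R_of_realR)/eqP.
by rewrite rmorphD rmorph1 rmorphXn rmorph0 gt_eqF // ltr_wpDr ?sqr_ge0.
Qed.

Lemma natr2_neq0 : (2%:R : RX) != 0.
Proof. by rewrite -(rmorph_nat cst) fmorph_eq0 -(fmorph_eq0 R_of_realR) rmorph_nat pnatr_eq0. Qed.

Lemma div_1Dsqr_cayley [F : fieldType] [h : F] :
    h + 1 != 0 -> 1 + h ^+ 2 != 0 -> 2%:R != 0 :> F ->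
  h / (1 + h ^+ 2) = 1 / (1 + ((h - 1) / (h + 1)) ^+ 2) - 1 / (1 + 1 ^+ 2).
Proof.
move=> hp1 h_ok two_neq0.
have -> : 1 + ((h - 1) / (h + 1)) ^+ 2 = 2%:R * (1 + h ^+ 2) / (h + 1) ^+ 2.
  by field.
by field; rewrite hp1 h_ok two_neq0.
Qed.

Lemma dress_div_1Dsqr (h : RX) : 1 + h ^+ 2 != 0 -> dress (h / (1 + h ^+ 2)).
Proof.
move=> h_ok; have [->|h_neqN1] := eqVneq h (-1).
  by rewrite sqrrN mulNr; apply/dress_opp/dress_gen.
have hp1 : h + 1 != 0 by rewrite addr_eq0.
rewrite (div_1Dsqr_cayley hp1 h_ok natr2_neq0).
by apply: dress_sub; exact: dress_gen.
Qed.

Lemma div_sqr_addC_lin [F : fieldType] [a b v : F] (n0 n1 : F) :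
    b != 0 -> 1 + v ^+ 2 != 0 ->
  (n0 + n1 * (b * v + a)) / ((b * v) ^+ 2 + b ^+ 2) =
    (n0 + n1 * a) / b ^+ 2 * (1 / (1 + v ^+ 2)) + n1 / b * (v / (1 + v ^+ 2)).
Proof.
move=> b_neq0 v_ok.
have -> : (b * v) ^+ 2 + b ^+ 2 = b ^+ 2 * (1 + v ^+ 2) by ring.
by field; rewrite b_neq0 v_ok.
Qed.

Lemma dress_frac_sqr_addC (a b : realR) (N : {poly realR}) :
    b != 0 -> (size N <= 2)%N ->
  dress (N%:F / (('X - a%:P) ^+ 2 + (b ^+ 2)%:P)%:F).
Proof.
move=> b_neq0 /poly_size2E ->.
pose v := ('X - a%:P) * (b^-1)%:P.
have eXa : 'X - a%:P = b%:P * v by rewrite /v mulrCA -polyCM divff // mulr1.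
have eX : 'X = b%:P * v + a%:P by rewrite -eXa subrK.
have cb_neq0 : cst b != 0 by rewrite fmorph_eq0.
clearbody v; rewrite eXa {1}eX !tofracD tofracXn !tofracM tofracD tofracM.
rewrite -[((b ^+ 2)%:P)%:F]/(cst (b ^+ 2)) rmorphXn.
rewrite -/(cst N`_0) -/(cst N`_1) -/(cst a) -/(cst b).
rewrite (div_sqr_addC_lin _ _ cb_neq0 (tofrac_1sqr_neq0 v)).
apply: dress_add; apply: dress_mul.
- by rewrite -rmorphM -rmorphD -rmorphXn -fmorph_div; exact: dress_cst.
- exact: dress_gen.
- by rewrite -fmorph_div; exact: dress_cst.
- exact: dress_div_1Dsqr (tofrac_1sqr_neq0 v).
Qed.

Lemma divMDl_split [F : fieldType] (a b : F) [c d : F] : c != 0 -> d != 0 ->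
  (a * d + b) / (c * d) = a / c + b / d * (1 / c).
Proof. by move=> c_neq0 d_neq0; field; rewrite c_neq0 d_neq0. Qed.

Lemma dress_frac (g N : {poly realR}) :
  (forall r, ~~ root g r) -> (size N <= size g)%N -> dress (N%:F / g%:F).
Proof.
have [n] := ubnP (size g); elim: n g N => // n IH g N g_lt g_rootfree N_le.
have g_neq0 : g != 0 by apply: contraTneq (g_rootfree 0) => ->; rewrite root0.
have [g_const|g_nconst] := leqP (size g) 1.
  rewrite (size1_polyC g_const) (size1_polyC (leq_trans N_le g_const)).
  by rewrite -/(cst _) -/(cst _) -fmorph_div; exact: dress_cst.
have [a [b [b_neq0 Q_dvd]]] := realR_rootfree_quadratic_factor g_rootfree g_nconst.
set Q := _ + _ in Q_dvd.
have sizeQ : size Q = 3%N by rewrite size_sqr_XsubC_addC.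
have Q_neq0 : Q != 0 by rewrite -size_poly_eq0 sizeQ.
set g' := g %/ Q; have eg : g = g' * Q by rewrite divpK.
have g'_neq0 : g' != 0 by apply: contraNneq g_neq0; rewrite eg => ->; rewrite mul0r.
have size_g : size g = (size g' + 2)%N by rewrite eg size_mul // sizeQ addnS addn2.
have g'_rootfree r : ~~ root g' r.
  by apply: contra (g_rootfree r); rewrite eg rootM => ->.
have IH' (M : {poly realR}) : (size M <= size g')%N -> dress (M%:F / g'%:F).
  by apply: IH => //; rewrite -ltnS (leq_trans _ g_lt) // size_g addn2.
have Q_F : Q%:F != 0 by rewrite tofrac_eq0.
have g'_F : g'%:F != 0 by rewrite tofrac_eq0.
rewrite eg (divp_eq N Q) tofracD !tofracM (divMDl_split _ _ g'_F Q_F).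
apply: dress_add; first by apply: IH'; rewrite size_divp // sizeQ leq_subLR addnC -size_g.
apply: dress_mul; last by rewrite -tofrac1; apply: IH'; rewrite size_poly1 lt0n size_poly_eq0.
apply: dress_frac_sqr_addC => //.
by have := ltn_modpN0 N Q_neq0; rewrite sizeQ.
Qed.

Definition mx2 {R : nzRingType} (a b c d : R) : 'M[R]_2 :=
  \matrix_(i, j) if i == 0 :> nat then (if j == 0 :> nat then a else b)
                 else (if j == 0 :> nat then c else d).

Lemma mul_mx2 (R : nzRingType) (a b c d a' b' c' d' : R) :
  mx2 a b c d *m mx2 a' b' c' d' =
  mx2 (a * a' + b * c') (a * b' + b * d') (c * a' + d * c') (c * b' + d * d').
Proof.
apply/matrixP => i j; rewrite !mxE big_ord_recl big_ord1 !mxE /=.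
by case: i => [[|[|i]] hi]; case: j => [[|[|j]] hj].
Qed.

Lemma mx2_idempotent (R : comNzRingType) (a b c d : R) :
  a + d = 1 -> a * d = b * c -> mx2 a b c d *m mx2 a b c d = mx2 a b c d.
Proof.
move=> tr1 det0; have ed : d = 1 - a by rewrite -tr1 addrC addKr.
rewrite mul_mx2 ed in det0 *; congr mx2; rewrite ?[c * b]mulrC -?det0; ring.
Qed.

Lemma mx2_0k_factor (R : comNzRingType) (k : R) :
  mx2 0 k 0 0 = mx2 1 0 0 0 *m mx2 0 k 0 1.
Proof. by rewrite mul_mx2; congr mx2; ring. Qed.

Lemma mx2_k0_factor (R : comNzRingType) (k : R) :
  mx2 k 0 0 0 = mx2 1 (k - 1) 0 0 *m mx2 1 0 1 0.
Proof. by rewrite mul_mx2; congr mx2; ring. Qed.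

Lemma mx2_0k_mul (R : comNzRingType) (k a b c d : R) :
  mx2 0 k 0 0 *m mx2 a b c d = mx2 (k * c) (k * d) 0 0.
Proof. by rewrite mul_mx2; congr mx2; ring. Qed.

Lemma mx2_k0_mul (R : comNzRingType) (k a b c d : R) :
  mx2 k 0 0 0 *m mx2 a b c d = mx2 (k * a) (k * b) 0 0.
Proof. by rewrite mul_mx2; congr mx2; ring. Qed.

Lemma foldr_mulmx_1 (R : nzRingType) n (s : seq 'M[R]_n) (B : 'M[R]_n) :
  foldr (fun E B => E *m B) B s = foldr (fun E B => E *m B) 1%:M s *m B.
Proof. by elim: s => [|E s IH] /=; rewrite ?mul1mx // IH mulmxA. Qed.

Lemma prod_idempotents_mul n (A B : 'M[RX]_n) :
  prod_idempotents_over_dress A -> prod_idempotents_over_dress B ->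
  prod_idempotents_over_dress (A *m B).
Proof.
move=> [sA [sA_idem ->]] [sB [sB_idem ->]]; exists (sA ++ sB); split.
  by move=> E; rewrite mem_cat => /orP[]; [exact: sA_idem|exact: sB_idem].
by rewrite foldr_cat [RHS]foldr_mulmx_1.
Qed.

Lemma prod_idempotents_mx2 (a b c d : RX) :
    dress a -> dress b -> dress c -> dress d -> a + d = 1 -> a * d = b * c ->
  prod_idempotents_over_dress (mx2 a b c d).
Proof.
move=> da db dc dd tr1 det0; exists [:: mx2 a b c d]; split; last by rewrite /= mulmx1.
move=> E; rewrite inE => /eqP ->; split; last exact: mx2_idempotent.
by move=> i j; rewrite mxE; case: i => [[|[|i]] hi]; case: j => [[|[|j]] hj].
Qed.

Lemma prod_idempotents_mx2_0k (k : RX) : dress k -> prod_idempotents_over_dress (mx2 0 k 0 0).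
Proof.
move=> dk; rewrite mx2_0k_factor; apply: prod_idempotents_mul.
  by apply: prod_idempotents_mx2; rewrite ?addr0 ?mulr0 ?mul0r.
by apply: prod_idempotents_mx2; rewrite ?add0r ?mulr0 ?mul0r.
Qed.

Lemma prod_idempotents_mx2_k0 (k : RX) : dress k -> prod_idempotents_over_dress (mx2 k 0 0 0).
Proof.
move=> dk; rewrite mx2_k0_factor; apply: prod_idempotents_mul.
  by apply: prod_idempotents_mx2; rewrite ?addr0 ?mulr0 ?mul0r //; apply: dress_sub.
by apply: prod_idempotents_mx2; rewrite ?addr0 ?mulr0 ?mul0r.
Qed.

Section RowScaling.
Context {P Q : RX} {c : realR}.
Hypotheses (dP : dress P) (dQ : dress Q) (c_neq0 : c != 0).

Let cc_neq0 : cst c != 0. Proof. by rewrite fmorph_eq0. Qed.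
Let dc : dress (cst c). Proof. exact: dress_cst. Qed.
Let dcV : dress (cst c)^-1. Proof. by rewrite -fmorphV; exact: dress_cst. Qed.

Lemma prod_idempotents_bottom_row (b : RX) : dress b ->
    b * (cst c * P) = (1 - cst c * Q) * (cst c * Q) ->
  prod_idempotents_over_dress (mx2 P Q 0 0).
Proof.
move=> db det0.
have -> : mx2 P Q 0 0 = mx2 0 (cst c)^-1 0 0 *m mx2 (1 - cst c * Q) b (cst c * P) (cst c * Q).
  by rewrite mx2_0k_mul !mulrA mulVf // !mul1r.
apply: prod_idempotents_mul; first exact: prod_idempotents_mx2_0k.
apply: prod_idempotents_mx2; rewrite ?subrK //; do ?apply: dress_mul => //.
by apply: dress_sub => //; apply: dress_mul.
Qed.

Lemma prod_idempotents_top_row (w : RX) : dress w ->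
    cst c * P * (1 - cst c * P) = cst c * Q * w ->
  prod_idempotents_over_dress (mx2 P Q 0 0).
Proof.
move=> dw det0.
have -> : mx2 P Q 0 0 = mx2 (cst c)^-1 0 0 0 *m mx2 (cst c * P) (cst c * Q) w (1 - cst c * P).
  by rewrite mx2_k0_mul !mulrA mulVf // !mul1r.
apply: prod_idempotents_mul; first exact: prod_idempotents_mx2_k0.
apply: prod_idempotents_mx2; rewrite ?subrKC //; do ?apply: dress_mul => //.
by apply: dress_sub => //; apply: dress_mul.
Qed.

End RowScaling.

Section LinearDivisors.
Context {F : fieldType}.
Implicit Types (u v g : {poly F}) (a : F).

Lemma size2_root [u] : size u = 2%N -> exists a, root u a.
Proof.
move=> size_u; have u1_neq0 : u`_1 != 0.
  have : lead_coef u != 0 by rewrite lead_coef_eq0 -size_poly_eq0 size_u.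
  by rewrite lead_coefE size_u.
exists (- (u`_0 / u`_1)); rewrite /root {1}(poly_size2E (eq_leq size_u)).
by rewrite hornerD hornerM hornerX !hornerC mulrN mulrC divfK // subrr.
Qed.

Lemma size2_root_eqp [u a] : size u = 2%N -> root u a -> u %= 'X - a%:P.
Proof.
move=> size_u u_a; rewrite eqp_sym -dvdp_size_eqp ?dvdp_XsubCl //.
by rewrite size_XsubC size_u.
Qed.

Lemma size2_cofactor [u v g a] : size u = 2%N -> root u a -> ~~ root v a -> ~~ root g a ->
  exists2 c, c != 0 & exists N, g - c%:P * v = N * u.
Proof.
move=> size_u u_a v_na g_na; exists (g.[a] / v.[a]); first by rewrite mulf_neq0 ?invr_eq0.
exists ((g - (g.[a] / v.[a])%:P * v) %/ u); rewrite divpK //.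
rewrite (eqp_dvdl _ (size2_root_eqp size_u u_a)) dvdp_XsubCl.
by rewrite /root hornerD hornerN hornerM hornerC mulfVK // subrr.
Qed.

Lemma size2_multiple_or_root [u v] : u != 0 -> (size u <= 2)%N -> (size v <= 2)%N ->
  [\/ exists k, v = k%:P * u,
      exists a, [/\ size u = 2%N, root u a & ~~ root v a] |
      exists a, [/\ size v = 2%N, root v a & ~~ root u a]].
Proof.
move=> u_neq0 size_u size_v.
have [u_const|u_lin] := leqP (size u) 1.
  have u0_neq0 : u`_0 != 0 by rewrite -polyC_eq0 -(size1_polyC u_const).
  have [v_const|v_lin] := leqP (size v) 1.
    apply: Or31; exists (v`_0 / u`_0).
    by rewrite {2}(size1_polyC u_const) -polyCM mulfVK // -size1_polyC.
  have size_v2 : size v = 2%N by apply/eqP; rewrite eqn_leq size_v.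
  have [a v_a] := size2_root size_v2; apply: Or33; exists a; split=> //.
  by rewrite /root [u]size1_polyC // hornerC.
have size_u2 : size u = 2%N by apply/eqP; rewrite eqn_leq size_u.
have [a u_a] := size2_root size_u2.
have [v_a|v_na] := boolP (root v a); last by apply: Or32; exists a.
apply: Or31; exists (v %/ u)`_0.
have u_dvd_v : u %| v by rewrite (eqp_dvdl _ (size2_root_eqp size_u2 u_a)) dvdp_XsubCl.
rewrite -[v in LHS](divpK u_dvd_v) -size1_polyC //.
by rewrite size_divp // size_u2 leq_subLR.
Qed.

End LinearDivisors.

(* When deg gamma < deg v <= 1, gamma and N are constants and the claim follows from
   the hypothesis v/gamma in D. *)
Lemma dress_frac_cofactor (u v g N : {poly realR}) (c : realR) :
    size u = 2%N -> (size v <= 2)%N -> (forall r, ~~ root g r) ->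
    dress (v%:F / g%:F) -> g - c%:P * v = N * u ->
  dress ((v * N)%:F / g%:F).
Proof.
move=> size_u size_v g_rootfree dQ eN.
have [->|N_neq0] := eqVneq N 0; first by rewrite mulr0 tofrac0 mul0r.
have u_neq0 : u != 0 by rewrite -size_poly_eq0 size_u.
have size_Nu : (size N).+1 = size (g - c%:P * v).
  by rewrite eN size_mul // size_u addn2.
have size_cv : (size (c%:P * v)%R <= size v)%N.
  by rewrite mul_polyC size_scale_leq.
have [v_le_g|g_lt_v] := leqP (size v) (size g).
  apply: dress_frac => //; apply: leq_trans (size_mul_leq _ _) _.
  have : ((size N).+1 <= size g)%N.
    rewrite size_Nu; apply: leq_trans (size_polyD _ _) _.
    by rewrite size_polyN geq_max leqnn (leq_trans size_cv).
  by move: size_v; lia.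
have g_const : (size g <= 1)%N by rewrite -ltnS (leq_trans g_lt_v).
have N_const : (size N <= 1)%N.
  rewrite -ltnS size_Nu; apply: leq_trans (size_polyD _ _) _.
  by rewrite size_polyN geq_max (leq_trans g_const) // (leq_trans size_cv).
rewrite tofracM [N]size1_polyC // -/(cst _) mulrAC; apply: dress_mul => //.
exact: dress_cst.
Qed.

Lemma cofactor_identity [F : fieldType] [g c u v n : F] :
  g != 0 -> g - c * v = n * u ->
  v * n / g * (c * (u / g)) = (1 - c * (v / g)) * (c * (v / g)).
Proof.
move=> g_neq0 eN.
have -> : (1 - c * (v / g)) * (c * (v / g)) = (g - c * v) * c * v / g ^+ 2 by field.
by rewrite eN; field.
Qed.

Theorem corollary3p4 (x y gamma : {poly realR})
  (hx : (size x <= 2)%N) (hy : (size y <= 2)%N)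
  (hgamma : forall r : realR, ~~ root gamma r)
  (hp : dress (x%:F / gamma%:F)) (hq : dress (y%:F / gamma%:F)) :
  prod_idempotents_over_dress
    (\matrix_(i < 2, j < 2)
       (if i == 0%N :> nat then (if j == 0%N :> nat then x%:F / gamma%:F else y%:F / gamma%:F)
        else 0) : 'M[RX]_2).
Proof.
set P := x%:F / gamma%:F; set Q := y%:F / gamma%:F.
have -> : \matrix_(i < 2, j < 2) (if i == 0%N :> nat then
    (if j == 0%N :> nat then P else Q) else 0) = mx2 P Q 0 0.
  by apply/matrixP => i j; rewrite !mxE; case: (i == 0 :> nat); case: (j == 0 :> nat).
have G_neq0 : gamma%:F != 0.
  by rewrite tofrac_eq0; apply: contraTneq (hgamma 0) => ->; rewrite root0.
have [x0|x_neq0] := eqVneq x 0.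
  by rewrite /P x0 tofrac0 mul0r; exact: prod_idempotents_mx2_0k.
case: (size2_multiple_or_root x_neq0 hx hy) => [[k ey]|[a [size_x x_a y_na]]|[a [size_y y_a x_na]]].
- apply: (prod_idempotents_bottom_row hp hq (oner_neq0 _) (cst k * (1 - Q))).
    by apply: dress_mul; [exact: dress_cst|apply: dress_sub].
  have eQ : Q = cst k * P by rewrite /Q ey tofracM mulrA.
  by rewrite rmorph1 !mul1r -/P -/Q mulrAC mulrC eQ.
- have [c c_neq0 [N eN]] := size2_cofactor size_x x_a y_na (hgamma a).
  apply: (prod_idempotents_bottom_row hp hq c_neq0 ((y * N)%:F / gamma%:F)).
    exact: dress_frac_cofactor size_x hy hgamma hq eN.
  have eNF : gamma%:F - cst c * y%:F = N%:F * x%:F by rewrite -tofracM -tofracB eN tofracM.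
  by rewrite tofracM (cofactor_identity G_neq0 eNF).
- have [c c_neq0 [N eN]] := size2_cofactor size_y y_a x_na (hgamma a).
  apply: (prod_idempotents_top_row hp hq c_neq0 ((x * N)%:F / gamma%:F)).
    exact: dress_frac_cofactor size_y hx hgamma hp eN.
  have eNF : gamma%:F - cst c * x%:F = N%:F * y%:F by rewrite -tofracM -tofracB eN tofracM.
  by rewrite mulrC [RHS]mulrC tofracM (cofactor_identity G_neq0 eNF).
Qed.
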